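(* For every $1$-Sperner hypergraph ${\cal H}=(V,{\cal E})$ with $|V|\ge2$ and without universal vertices, isolated vertices, and twin vertices, we have $|{\cal E}|\ge\left\lceil\frac{|V|+2}{2}\right\rceil$. This bound is sharp: for every $k\ge2$ there is such a hypergraph with $|V|=2^k-2$ and $|{\cal E}|=2^{k-1}=\left\lceil\frac{|V|+2}{2}\right\rceil$.
   Context: A hypergraph ${\cal H}=(V,{\cal E})$ consists of a finite vertex set $V$ and a set ${\cal E}$ of subsets of $V$. It is $1$-Sperner if every two distinct hyperedges $e,f$ satisfy $\min\{|e\setminus f|,|f\setminus e|\}=1$. A vertex is universal (resp. isolated) if it belongs to all (resp. no) hyperedges; two distinct vertices are twins if they belong to exactly the same hyperedges. *)

From mathcomp Require Import all_boot.
Set Implicit Arguments. Unset Strict Implicit. Unset Printing Implicit Defensive.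

Definition one_sperner (V : finType) (E : {set {set V}}) : Prop :=
  forall e f, e \in E -> f \in E -> e != f ->
    minn #|e :\: f| #|f :\: e| = 1.

Definition universal_vertex (V : finType) (E : {set {set V}}) (v : V) : Prop :=
  forall e, e \in E -> v \in e.

Definition isolated_vertex (V : finType) (E : {set {set V}}) (v : V) : Prop :=
  forall e, e \in E -> v \notin e.

Definition twins (V : finType) (E : {set {set V}}) (u v : V) : Prop :=
  u != v /\ forall e, e \in E -> (u \in e) = (v \in e).

Definition reduced_hypergraph (V : finType) (E : {set {set V}}) : Prop :=
  (forall v, ~ universal_vertex E v) /\
  (forall v, ~ isolated_vertex E v) /\
  (forall u v, ~ twins E u v).

Definition ceil_half (a : nat) : nat := (a + 1) %/ 2.

From mathcomp Require Import all_boot zify.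
Set Implicit Arguments. Unset Strict Implicit. Unset Printing Implicit Defensive.

(* Attach to a hypergraph E the family of its stars [star E v = {e in E | v \in e}]
   together with the empty family and E itself. Removing an edge e of minimum size,
   the map s |-> s :\ e sends this family into the family of E :\ e and is injective
   outside at most two members, namely E and at most one star: two such stars would
   produce edges f1, f2 with |f1 \ f2| >= 2 and |f2 \ f1| >= 2. By induction the
   family has at most 2|E| members, and without universal, isolated and twin vertices
   it has exactly |V| + 2. Sharpness: given E on T, take new vertices a, b and two
   copies T1, T2 of T; the edges {a} U e1 and {b} U T1 U f2 (e, f in E) again form a
   reduced 1-Sperner hypergraph, with 2|E| edges on 2|T| + 2 vertices. Iterate this
   doubling starting from the single empty edge. *)

Section Stars.
Variable V : finType.
Implicit Types (E : {set {set V}}) (u v : V).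

Definition star E v : {set {set V}} := [set e in E | v \in e].

Definition star_family E : {set {set {set V}}} :=
  set0 |: (E |: [set star E v | v : V]).

Lemma mem_star E v e : (e \in star E v) = (e \in E) && (v \in e).
Proof. by rewrite inE. Qed.

Lemma universal_vertexE E v : universal_vertex E v <-> star E v = E.
Proof.
split=> [uv | sv e]; last by rewrite -sv inE => /andP[].
by apply/setP => e; rewrite inE andb_idr // => /uv.
Qed.

Lemma isolated_vertexE E v : isolated_vertex E v <-> star E v = set0.
Proof.
split=> [iv | sv e eE]; first by apply/setP => e; rewrite !inE; apply/andP => -[/iv/negP].
apply/negP => ve; suff : e \in star E v by rewrite sv inE.
by rewrite inE eE ve.
Qed.

Lemma twinsE E u v : twins E u v <-> u != v /\ star E u = star E v.
Proof.
split=> -[uv h]; split=> //.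
  by apply/setP => e; rewrite !inE; case eE: (e \in E); rewrite //= h.
by move=> e eE; have := congr1 (fun s : {set {set V}} => e \in s) h; rewrite /= !inE eE.
Qed.

Lemma reducedP E : reduced_hypergraph E <->
  [/\ injective (star E), forall v, star E v != E & forall v, star E v != set0].
Proof.
split=> [[nU [nI nT]] | [sinj nU nI]].
  split=> [u v suv | v | v].
  - by apply/eqP/negPn/negP => uv; apply: (nT u v); apply/twinsE.
  - by apply/eqP => /universal_vertexE/nU.
  - by apply/eqP => /isolated_vertexE/nI.
split; last split.
- by move=> v /universal_vertexE/eqP; rewrite (negbTE (nU v)).
- by move=> v /isolated_vertexE/eqP; rewrite (negbTE (nI v)).
- by move=> u v /twinsE[uv /sinj/eqP]; rewrite (negbTE uv).
Qed.

Lemma star_neqT_notin E v : star E v != E -> exists2 f, f \in E & v \notin f.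
Proof.
move=> sv; apply/exists_inP; apply: contraR sv => /exists_inPn nf.
by apply/eqP/universal_vertexE => f /nf; rewrite negbK.
Qed.

Lemma star_family_sub E : star_family E \subset powerset E.
Proof.
apply/subsetP => s; rewrite !inE => /orP[/eqP->|/orP[/eqP->|/imsetP[v _ ->]]] //.
- exact: sub0set.
- by apply/subsetP => f; rewrite inE => /andP[].
Qed.

Lemma card_star_family E : 0 < #|V| -> reduced_hypergraph E -> #|star_family E| = #|V| + 2.
Proof.
case/card_gt0P=> v0 _ /reducedP[sinj nU nI].
have [e e0] := set0Pn _ (nI v0); have eE : e \in E by move: e0; rewrite inE => /andP[].
rewrite /star_family cardsU1 cardsU1 card_imset // cardT -cardE.
have -> : E \notin [set star E v | v : V].
  by apply/imsetP => -[v _ /eqP]; rewrite eq_sym (negbTE (nU v)).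
have -> : set0 \notin E |: [set star E v | v : V].
  rewrite !inE negb_or; apply/andP; split; first by apply/eqP => E0; rewrite -E0 inE in eE.
  by apply/imsetP => -[v _ /eqP]; rewrite eq_sym (negbTE (nI v)).
lia.
Qed.
End Stars.

Lemma one_sperner_subset (V : finType) (E F : {set {set V}}) :
  F \subset E -> one_sperner E -> one_sperner F.
Proof. by move=> /subsetP sFE hS e f /sFE eE /sFE; apply: hS. Qed.

Lemma card_le_imset_setD1 (T : finType) (S : {set {set T}}) x :
  #|S| <= #|[set s :\ x | s in S]| + #|[set s in S | (x \in s) && (s :\ x \in S)]|.
Proof.
set X := [set s in S | _].
have sXS : X \subset S by apply/subsetP => s; rewrite inE => /andP[].
have injD1 : {in S :\: X &, injective (fun s => s :\ x)}.
  have setD1_id (t : {set T}) : x \notin t -> t :\ x = t.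
    by move=> xt; apply/setDidPl; rewrite disjoint_sym disjoints1.
  have memX (s t : {set T}) :
      s \in S -> t \in S -> x \in s -> x \notin t -> s :\ x = t :\ x -> s \in X.
    by move=> sS tS xs xt st; rewrite inE sS xs st setD1_id.
  move=> s t /setDP[sS sX] /setDP[tS tX] st.
  have [xs|xs] := boolP (x \in s); have [xt|xt] := boolP (x \in t).
  - by rewrite -(setD1K xs) -(setD1K xt) st.
  - by rewrite (memX s t) in sX.
  - by rewrite (memX t s) in tX.
  - by rewrite -(setD1_id _ xs) -(setD1_id _ xt).
rewrite -(cardsID X S) (setIidPr sXS) addnC leq_add2r -(card_in_imset injD1).
by apply/subset_leq_card/imsetS/subsetDl.
Qed.

Section MinimumEdge.
Variables (V : finType) (E : {set {set V}}) (e : {set V}).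
Hypotheses (hS : one_sperner E) (eE : e \in E) (emin : forall f, f \in E -> #|e| <= #|f|).

Lemma card_setD_min_edge f : f \in E -> f != e -> #|e :\: f| = 1.
Proof.
move=> fE fe; have := hS eE fE; rewrite eq_sym => /(_ fe).
have := emin fE; have := cardsID f e; have := cardsID e f; rewrite setIC; lia.
Qed.

Lemma star_setD1_in_family u f :
  f \in star E u -> f != e -> star E u :\ e \in star_family E ->
  exists2 v, v \notin e & forall h, h \in E -> h != e -> (v \in h) = (u \in h).
Proof.
move=> fu fe; rewrite /star_family !inE => /orP[/eqP s0 | /orP[/eqP sE | /imsetP[v _ sv]]].
- suff : f \in star E u :\ e by rewrite s0 inE.
  by rewrite in_setD1 fe fu.
- by move: eE; rewrite -sE !inE eqxx.
- exists v; first by have := setD11 e (star E u); rewrite sv inE eE => /negbT.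
  move=> h hE he; have := congr1 (fun s : {set {set V}} => h \in s) sv.
  by rewrite /= !inE he hE.
Qed.

Lemma star_setD1_separates u u' f f' :
  u != u' -> u \in e -> u' \in e -> star E u :\ e \in star_family E ->
  f \in E -> u \notin f -> f' \in E -> u' \notin f' -> 1 < #|f' :\: f|.
Proof.
move=> uu' ue u'e sF fE uf f'E u'f'.
have fe : f != e by apply: contraNneq uf => ->.
have f'e : f' != e by apply: contraNneq u'f' => ->.
have uf' : u \in f'.
  apply: contraT => uf'; suff : 1 < #|e :\: f'| by rewrite card_setD_min_edge.
  by apply/card_gt1P; exists u, u'; rewrite !inE ue u'e uf' u'f'.
have f'u : f' \in star E u by rewrite inE f'E uf'.
have [v ve vu] := star_setD1_in_family f'u f'e sF.
apply/card_gt1P; exists u, v; rewrite !inE vu // vu // uf uf'.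
by split=> //; apply: contraNneq ve => <-.
Qed.

Lemma removable_star_uniq u1 u2 :
  star E u1 != E -> star E u2 != E -> e \in star E u1 -> e \in star E u2 ->
  star E u1 :\ e \in star_family E -> star E u2 :\ e \in star_family E ->
  star E u1 = star E u2.
Proof.
move=> /star_neqT_notin[f1 f1E u1f1] /star_neqT_notin[f2 f2E u2f2].
move=> /setIdP[_ u1e] /setIdP[_ u2e] s1F s2F.
have [->//|u12] := eqVneq u1 u2.
have u21 : u2 != u1 by rewrite eq_sym.
have lt21 := star_setD1_separates u12 u1e u2e s1F f1E u1f1 f2E u2f2.
have lt12 := star_setD1_separates u21 u2e u1e s2F f2E u2f2 f1E u1f1.
have f12 : f1 != f2 by apply: contraTneq lt21 => ->; rewrite setDv cards0.
suff : 1 < minn #|f1 :\: f2| #|f2 :\: f1| by rewrite hS.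
by rewrite leq_min lt12 lt21.
Qed.

Lemma card_removable_le2 :
  #|[set s in star_family E | (e \in s) && (s :\ e \in star_family E)]| <= 2.
Proof.
set X := [set s in _ | _].
have starX s : s \in X :\ E ->
    exists u, [/\ s = star E u, s != E, e \in s & s :\ e \in star_family E].
  rewrite in_setD1 in_set => /and3P[sE sF /andP[es seF]].
  rewrite /star_family !inE (negbTE sE) in sF; case/orP: sF => [/eqP s0|/imsetP[u _ su]].
    by rewrite s0 inE in es.
  by exists u.
have X1 : #|X :\ E| <= 1.
  apply/card_le1_eqP => s1 s2 /starX[u1 [-> ? ? ?]] /starX[u2 [-> ? ? ?]].
  exact: removable_star_uniq.
by rewrite (cardsD1 E X); apply: leq_add (leq_b1 _) X1.
Qed.

Lemma card_star_family_setD1 : #|star_family E| <= #|star_family (E :\ e)| + 2.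
Proof.
apply: leq_trans (card_le_imset_setD1 _ e) _; rewrite leq_add ?card_removable_le2 //.
apply/subset_leq_card/subsetP => _ /imsetP[s + ->].
rewrite /star_family !inE => /orP[/eqP->|/orP[/eqP->|/imsetP[v _ ->]]].
- by rewrite set0D eqxx.
- by rewrite eqxx orbT.
- suff -> : star E v :\ e = star (E :\ e) v by rewrite imset_f ?orbT.
  by apply/setP => f; rewrite !inE andbA.
Qed.

End MinimumEdge.

Lemma card_star_family_le (V : finType) (E : {set {set V}}) :
  E != set0 -> one_sperner E -> #|star_family E| <= #|E|.*2.
Proof.
have [n] := ubnP #|E|; elim: n E => // n IH E ltEn E0 hS.
have [e0 e0E] := set0Pn _ E0.
have [e eE emin] : exists2 e, e \in E & forall f, f \in E -> #|e| <= #|f|.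
  by case: (arg_minnP (fun f : {set V} => #|f|) e0E) => e; exists e.
have [E1 | E1] := eqVneq (E :\ e) set0.
  have cE : #|E| = 1 by rewrite (cardsD1 e) eE E1 cards0.
  by apply: leq_trans (subset_leq_card (star_family_sub E)) _; rewrite card_powerset cE.
have cE : #|E| = #|E :\ e|.+1 by rewrite (cardsD1 e) eE.
apply: leq_trans (card_star_family_setD1 hS eE emin) _.
rewrite cE doubleS addn2 !ltnS; apply: IH E1 (one_sperner_subset (subsetDl E [set e]) hS).
by rewrite -ltnS -cE.
Qed.

Lemma reduced_one_sperner_card_lb (V : finType) (E : {set {set V}}) :
  0 < #|V| -> one_sperner E -> reduced_hypergraph E -> #|V| + 2 <= #|E|.*2.
Proof.
move=> V0 hS hR; rewrite -(card_star_family V0 hR) card_star_family_le //.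
have /reducedP[_ _ nI] := hR; have [v0 _] := card_gt0P V0.
by apply: contra_neq (nI v0) => E0; apply/setP => f; rewrite !inE E0 inE.
Qed.

Section Doubling.
Variable T : finType.
Implicit Types (e f : {set T}) (E : {set {set T}}).

Definition dvertex : finType := option (option (T + T)).

Definition lvertex (x : T) : dvertex := Some (Some (inl x)).
Definition rvertex (y : T) : dvertex := Some (Some (inr y)).

(* [None] and [Some None] play the roles of a and b. *)
Definition doubleL (e : {set T}) : {set dvertex} :=
  [set v | match v with
           | None => true | Some None => false
           | Some (Some (inl x)) => x \in e | Some (Some (inr _)) => false end].

Definition doubleR (f : {set T}) : {set dvertex} :=
  [set v | match v with
           | None => false | Some None => true
           | Some (Some (inl _)) => true | Some (Some (inr y)) => y \in f end].

Definition double (E : {set {set T}}) : {set {set dvertex}} := doubleL @: E :|: doubleR @: E.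

Lemma lvertex_inj : injective lvertex. Proof. by move=> x y [->]. Qed.
Lemma rvertex_inj : injective rvertex. Proof. by move=> x y [->]. Qed.

Lemma doubleL_inj : injective doubleL.
Proof.
move=> e f eqef; apply/setP => x.
by have := congr1 (fun A : {set dvertex} => lvertex x \in A) eqef; rewrite /= !inE.
Qed.

Lemma doubleR_inj : injective doubleR.
Proof.
move=> e f eqef; apply/setP => x.
by have := congr1 (fun A : {set dvertex} => rvertex x \in A) eqef; rewrite /= !inE.
Qed.

Lemma doubleL_neqR e f : doubleL e != doubleR f.
Proof. by apply/eqP => /setP/(_ None); rewrite !inE. Qed.

Lemma card_doubleLD e f : #|doubleL e :\: doubleL f| = #|e :\: f|.
Proof.
rewrite -(card_imset _ lvertex_inj); apply: eq_card => v.
apply/idP/imsetP => [|[x xef ->]]; last by move: xef; rewrite !inE.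
by case: v => [[[x|x]|]|]; rewrite !inE //= => /andP[xf xe]; exists x; rewrite // !inE xf xe.
Qed.

Lemma card_doubleRD e f : #|doubleR e :\: doubleR f| = #|e :\: f|.
Proof.
rewrite -(card_imset _ rvertex_inj); apply: eq_card => v.
apply/idP/imsetP => [|[x xef ->]]; last by move: xef; rewrite !inE.
by case: v => [[[x|x]|]|]; rewrite !inE //= => /andP[xf xe]; exists x; rewrite // !inE xf xe.
Qed.

Lemma doubleLDR e f : doubleL e :\: doubleR f = [set None].
Proof. by apply/setP => -[[[x|x]|]|]; rewrite !inE ?andbF. Qed.

Lemma doubleRDL_neq0 e f : doubleR f :\: doubleL e != set0.
Proof. by apply/set0Pn; exists (Some None); rewrite !inE. Qed.

Lemma one_sperner_double E : one_sperner E -> one_sperner (double E).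
Proof.
move=> hS _ _ /setUP[]/imsetP[e eE ->] /setUP[]/imsetP[f fE ->] ef.
- by rewrite !card_doubleLD; apply: hS => //; apply: contraNneq ef => ->.
- by rewrite doubleLDR cards1; apply/minn_idPl; rewrite lt0n cards_eq0 doubleRDL_neq0.
- by rewrite doubleLDR cards1; apply/minn_idPr; rewrite lt0n cards_eq0 doubleRDL_neq0.
- by rewrite !card_doubleRD; apply: hS => //; apply: contraNneq ef => ->.
Qed.

Lemma mem_doubleL E e : (doubleL e \in double E) = (e \in E).
Proof.
rewrite in_setU (mem_imset _ _ doubleL_inj) orb_idr //.
by case/imsetP=> f _ /eqP; rewrite (negbTE (doubleL_neqR _ _)).
Qed.

Lemma mem_doubleR E f : (doubleR f \in double E) = (f \in E).
Proof.
rewrite in_setU (mem_imset _ _ doubleR_inj) orb_idl //.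
by case/imsetP=> e _ /eqP; rewrite eq_sym (negbTE (doubleL_neqR _ _)).
Qed.

Lemma card_double E : #|double E| = #|E|.*2.
Proof.
rewrite cardsU !card_imset; try exact: doubleL_inj; try exact: doubleR_inj.
suff -> : doubleL @: E :&: doubleR @: E = set0 by rewrite cards0 subn0 addnn.
apply/setP => F; rewrite !inE; apply/andP => -[/imsetP[e _ ->] /imsetP[f _ /eqP]].
by rewrite (negbTE (doubleL_neqR e f)).
Qed.

Definition profile E (F : {set {set dvertex}}) : {set {set T}} * {set {set T}} :=
  ([set e in E | doubleL e \in F], [set f in E | doubleR f \in F]).

Lemma profile_star E v : profile E (star (double E) v) =
  match v with
  | None => (E, set0) | Some None => (set0, E)
  | Some (Some (inl x)) => (star E x, E) | Some (Some (inr y)) => (set0, star E y) end.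
Proof.
by case: v => [[[x|x]|]|]; congr pair; apply/setP => e;
  rewrite in_set !mem_star ?mem_doubleL ?mem_doubleR !inE ?andbA ?andbb ?andbF ?andbT.
Qed.

Lemma profile_star_inj E : E != set0 -> reduced_hypergraph E ->
  injective (fun v => profile E (star (double E) v)).
Proof.
move=> E0 /reducedP[sinj sT s0] u v; rewrite /= !profile_star.
have starTF z : (star E z == E) = false by apply: negbTE.
have TstarF z : (E == star E z) = false by rewrite eq_sym starTF.
have star0F z : (star E z == set0) = false by apply: negbTE.
have ostarF z : (set0 == star E z) = false by rewrite eq_sym star0F.
have E0F : (E == set0) = false by apply: negbTE.
have oEF : (set0 == E) = false by rewrite eq_sym E0F.
case: u => [[[x|x]|]|]; case: v => [[[y|y]|]|] // [].
all: first [by move=> /sinj ->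
           | by move=> /eqP; rewrite ?(starTF, TstarF, star0F, ostarF, E0F, oEF)].
Qed.

Lemma profile_double E : profile E (double E) = (E, E).
Proof.
by congr pair; apply/setP => e; rewrite in_set ?mem_doubleL ?mem_doubleR; case: (e \in E).
Qed.

Lemma profile0 E : profile E set0 = (set0, set0).
Proof. by congr pair; apply/setP => e; rewrite !inE andbF. Qed.

Lemma reduced_double E : E != set0 -> reduced_hypergraph E -> reduced_hypergraph (double E).
Proof.
move=> E0 hR; have /reducedP[_ sT s0] := hR; have E0' : set0 != E by rewrite eq_sym.
apply/reducedP; split=> [u v /(congr1 (profile E)) /(profile_star_inj E0 hR) // | v | v];
  apply/eqP => /(congr1 (profile E)); rewrite ?profile_double ?profile0 profile_star.
all: by case: v => [[[x|x]|]|] /eqP;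
  rewrite xpair_eqE ?(negbTE (sT _), negbTE (s0 _), negbTE E0, negbTE E0', andbF).
Qed.

End Doubling.

Section Relabelling.
Variables (T U : finType) (h : T -> U) (g : U -> T).
Hypotheses (hK : cancel h g) (gK : cancel g h).

Definition relabel (E : {set {set T}}) : {set {set U}} := [set h @: (e : {set T}) | e in E].

Lemma mem_imset_can (e : {set T}) y : (y \in h @: e) = (g y \in e).
Proof.
apply/imsetP/idP => [[x xe ->]|ye]; first by rewrite hK.
by exists (g y); rewrite ?gK.
Qed.

Lemma one_sperner_relabel E : one_sperner E -> one_sperner (relabel E).
Proof.
have hinj := can_inj hK.
have imsetD (e f : {set T}) : h @: e :\: h @: f = h @: (e :\: f).
  by apply/setP => y; rewrite !inE !mem_imset_can !inE.
move=> hS _ _ /imsetP[e eE ->] /imsetP[f fE ->] ef.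
by rewrite !imsetD !card_imset //; apply: hS => //; apply: contraNneq ef => ->.
Qed.

Lemma reduced_relabel E : reduced_hypergraph E -> reduced_hypergraph (relabel E).
Proof.
have relabelE e : e \in E -> h @: e \in relabel E by move=> eE; apply: imset_f.
move=> [nU [nI nT]]; split; last split.
- by move=> y hy; apply: (nU (g y)) => e /relabelE/hy; rewrite mem_imset_can.
- by move=> y hy; apply: (nI (g y)) => e /relabelE/hy; rewrite mem_imset_can.
- move=> y z [yz hyz]; apply: (nT (g y) (g z)); split.
    by apply: contra yz => /eqP/(can_inj gK)->.
  by move=> e /relabelE/hyz; rewrite !mem_imset_can.
Qed.

Lemma card_relabel E : #|relabel E| = #|E|.
Proof. exact/card_imset/imset_inj/(can_inj hK). Qed.

End Relabelling.

Lemma reduced_one_sperner_card_eq (T U : finType) (E : {set {set T}}) :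
  #|T| = #|U| -> one_sperner E -> reduced_hypergraph E ->
  exists E' : {set {set U}}, [/\ one_sperner E', reduced_hypergraph E' & #|E'| = #|E|].
Proof.
move=> cTU hS hR.
have [h [g hK gK]] : exists h : T -> U, exists2 g : U -> T, cancel h g & cancel g h.
  exists (fun x => enum_val (cast_ord cTU (enum_rank x))).
  exists (fun y => enum_val (cast_ord (esym cTU) (enum_rank y))) => z;
    by rewrite enum_valK ?cast_ordK ?cast_ordKV enum_rankK.
exists (relabel h E); split.
- exact: (one_sperner_relabel hK gK hS).
- exact: (reduced_relabel hK gK hR).
- exact: (card_relabel hK E).
Qed.

Lemma exists_reduced_one_sperner j :
  exists E : {set {set 'I_(2 ^ j.+1 - 2)}},
    [/\ one_sperner E, reduced_hypergraph E & #|E| = 2 ^ j].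
Proof.
elim: j => [|j [E [hS hR cE]]].
  exists [set set0]; split; last by rewrite cards1.
  - by move=> e f; rewrite !inE => /eqP-> /eqP->; rewrite eqxx.
  - by split; last split=> [[]|] //; case.
have E0 : E != set0 by rewrite -card_gt0 cE expn_gt0.
have cV : #|dvertex 'I_(2 ^ j.+1 - 2)| = #|'I_(2 ^ j.+2 - 2)|.
  have : 0 < 2 ^ j by rewrite expn_gt0.
  rewrite !card_option card_sum !card_ord !expnS; lia.
have [E' [hS' hR' cE']] :=
  reduced_one_sperner_card_eq cV (one_sperner_double hS) (reduced_double E0 hR).
by exists E'; split; rewrite // cE' card_double cE expnS mul2n.
Qed.

Theorem proposition17 :
  (forall (V : finType) (E : {set {set V}}),
      2 <= #|V| -> one_sperner E -> reduced_hypergraph E ->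
      ceil_half (#|V| + 2) <= #|E|)
  /\
  (forall k : nat, 2 <= k ->
      exists E : {set {set 'I_(2 ^ k - 2)}},
        one_sperner E /\ reduced_hypergraph E /\
        #|'I_(2 ^ k - 2)| = 2 ^ k - 2 /\
        #|E| = 2 ^ k.-1 /\ 2 ^ k.-1 = ceil_half (#|'I_(2 ^ k - 2)| + 2)).
Proof.
split=> [V E V2 hS hR | [|j] // _].
  have := reduced_one_sperner_card_lb (ltnW V2) hS hR.
  rewrite /ceil_half -mul2n; lia.
have [E [hS hR cE]] := exists_reduced_one_sperner j.
exists E; rewrite card_ord cE /ceil_half; do !split=> //.
have : 1 <= 2 ^ j by rewrite expn_gt0.
rewrite /= expnS; lia.
Qed.
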